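(* Let $q$ be a prime power, $u,v\in\mathbb{F}_q^3$ and $\mu\in\mathbb{F}_q$. (1) For every $\lambda\in\mathbb{F}_q^*$, $\widetilde{B}(\lambda u)\cap\widetilde{B}(\mu v)=\lambda\,[\widetilde{B}(u)\cap\widetilde{B}(\lambda^{-1}\mu v)]$. (2) If the family $\{\widetilde{B}(\lambda u):\lambda\in\mathbb{F}_q^*\}$ is a partition of $\widetilde{E}(u)$ and the family $\{\widetilde{B}(\lambda v):\lambda\in\mathbb{F}_q^*\}$ is a partition of $\widetilde{E}(v)$ (i.e. their members are pairwise disjoint with unions $\widetilde{E}(u)$, resp. $\widetilde{E}(v)$), then \[|\widetilde{E}(u)\cap\widetilde{E}(v)|=(q-1)\sum_{\mu\in\mathbb{F}_q^*}|\widetilde{B}(u)\cap\widetilde{B}(\mu v)|.\]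
   Context: $\mathbb{F}_q$ is the finite field with $q$ elements. Hamming distance $d(u,v)=|\{i:u_i\ne v_i\}|$ on $\mathbb{F}_q^3$; $B(u)=\{v:d(u,v)\le1\}$; $E(u)=\bigcup_{\lambda\in\mathbb{F}_q}B(\lambda u)$. $\mathcal{D}_q=\{(u_1,u_2,u_3)\in\mathbb{F}_q^3: u_1,u_2,u_3 \text{ pairwise distinct and nonzero}\}$, $\widetilde{B}(u)=B(u)\cap\mathcal{D}_q$, $\widetilde{E}(u)=E(u)\cap\mathcal{D}_q$. For a set $Z$ and scalar $\lambda$, $\lambda Z=\{\lambda z: z\in Z\}$. *)

From HB Require Import structures.
From mathcomp Require Import all_boot all_order all_algebra all_field.
Set Implicit Arguments. Unset Strict Implicit. Unset Printing Implicit Defensive.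
Import GRing.Theory.
Local Open Scope ring_scope.

(* Vectors of F_q^3 are row vectors 'rV[F]_3 over a finite field F (q = #|F|). *)
Section Defs.
Variable F : finFieldType.
Notation V := 'rV[F]_3.

Definition hdist (u v : V) : nat := #|[set i : 'I_3 | u 0 i != v 0 i]|.

Definition ball1 (u : V) : {set V} := [set v : V | (hdist u v <= 1)%N].

Definition Eset (u : V) : {set V} := \bigcup_(l : F) ball1 (l *: u).

Definition Dq : {set V} :=
  [set u : V | [&& u 0 0 != 0, u 0 1 != 0, u 0 2 != 0,
                  u 0 0 != u 0 1, u 0 0 != u 0 2 & u 0 1 != u 0 2]].

Definition Bt (u : V) : {set V} := ball1 u :&: Dq.
Definition Et (u : V) : {set V} := Eset u :&: Dq.

Definition sscale (l : F) (Z : {set V}) : {set V} := [set l *: z | z in Z].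

Definition Bt_partition (u : V) : Prop :=
  (forall l1 l2 : F, l1 != 0 -> l2 != 0 -> l1 != l2 ->
     [disjoint Bt (l1 *: u) & Bt (l2 *: u)]) /\
  \bigcup_(l : F | l != 0) Bt (l *: u) = Et u.
End Defs.

From HB Require Import structures.
From mathcomp Require Import all_boot all_order all_algebra all_field.
Import GRing.Theory.
Local Open Scope ring_scope.

(* Multiplication by a nonzero scalar preserves Hamming distance and the
   conditions defining D_q, so it maps each ball B~(a) onto B~(l a); this gives
   (1).  Under the partition hypotheses, E~(u) :&: E~(v) is the disjoint union of
   the sets B~(l u) :&: B~(m v) over l, m <> 0, and by (1) the inner sum over m
   does not depend on l, whence the factor q - 1 in (2). *)

Lemma card_bigcup_disjoint (I T : finType) (P : pred I) (A : I -> {set T}) :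
  {in P &, forall i j, i != j -> [disjoint A i & A j]} ->
  #|\bigcup_(i | P i) A i| = (\sum_(i | P i) #|A i|)%N.
Proof.
move=> disjA; rewrite big_mkcond /= -sum1_card partition_disjoint_bigcup.
  rewrite [RHS]big_mkcond; apply: eq_bigr => i _.
  by rewrite sum1_card; case: (P i); rewrite ?cards0.
move=> i j ij; case Pi: (P i); last by rewrite -setI_eq0 set0I.
case Pj: (P j); last by rewrite -setI_eq0 setI0.
exact: disjA.
Qed.

Lemma setI_bigcupl (I T : finType) (P : pred I) (A : I -> {set T}) (B : {set T}) :
  (\bigcup_(i | P i) A i) :&: B = \bigcup_(i | P i) (A i :&: B).
Proof.
exact: (big_morph (fun X : {set T} => X :&: B) (fun X Y => setIUl X Y B) (set0I B)).
Qed.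

Lemma setI_bigcupr (I T : finType) (P : pred I) (A : I -> {set T}) (B : {set T}) :
  B :&: \bigcup_(i | P i) A i = \bigcup_(i | P i) (B :&: A i).
Proof. exact: (big_morph (setI B) (setIUr B) (setI0 B)). Qed.

Section Scaling.
Variables (F : finFieldType) (l : F).
Hypothesis l_neq0 : l != 0.
Notation V := 'rV[F]_3.

Lemma hdist_scale (a b : V) : hdist (l *: a) (l *: b) = hdist a b.
Proof. by apply: eq_card => i; rewrite !inE !mxE (inj_eq (mulfI l_neq0)). Qed.

Lemma Dq_scale (a : V) : (l *: a \in Dq F) = (a \in Dq F).
Proof. by rewrite !inE !mxE !mulf_eq0 (negbTE l_neq0) !(inj_eq (mulfI l_neq0)). Qed.

Lemma Bt_scale (a : V) : Bt (l *: a) = sscale l (Bt a).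
Proof.
apply/setP => x; have -> : x = l *: (l^-1 *: x) by rewrite scalerA mulfV ?scale1r.
rewrite mem_imset; last exact: scalerI.
by rewrite !in_setI Dq_scale !inE hdist_scale.
Qed.

Lemma sscaleI (A B : {set V}) : sscale l (A :&: B) = sscale l A :&: sscale l B.
Proof. by apply: imsetI => x y _ _; apply: scalerI. Qed.

Lemma card_sscale (A : {set V}) : #|sscale l A| = #|A|.
Proof. exact/card_imset/scalerI. Qed.

Lemma BtI_scale (u v : V) (mu : F) :
  Bt (l *: u) :&: Bt (mu *: v) = sscale l (Bt u :&: Bt ((l^-1 * mu) *: v)).
Proof. by rewrite sscaleI -!Bt_scale scalerA mulrA mulfV // mul1r. Qed.

End Scaling.

Section Counting.
Variables (F : finFieldType) (u v : 'rV[F]_3).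

Lemma disjoint_BtI_partition (w : 'rV[F]_3) (W : {set 'rV[F]_3}) :
  Bt_partition w ->
  {in [pred m : F | m != 0] &, forall i j, i != j ->
    [disjoint W :&: Bt (i *: w) & W :&: Bt (j *: w)]}.
Proof.
move=> [disj _] i j inz jnz ij.
exact: disjointW (subsetIr _ _) (subsetIr _ _) (disj i j inz jnz ij).
Qed.

Lemma card_BtI_Et (l : F) : l != 0 -> Bt_partition v ->
  #|Bt (l *: u) :&: Et v| = (\sum_(m : F | m != 0%R) #|Bt u :&: Bt (m *: v)|)%N.
Proof.
move=> l_neq0 [disjv Ev]; rewrite -Ev setI_bigcupr card_bigcup_disjoint; last first.
  exact: disjoint_BtI_partition.
under eq_bigr => m _ do rewrite BtI_scale // card_sscale //.
rewrite (reindex_inj (mulfI l_neq0)) /=.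
under eq_bigr => m _ do rewrite mulrA mulVf // mul1r.
by apply: eq_bigl => m; rewrite mulf_eq0 (negbTE l_neq0).
Qed.

End Counting.

Theorem lemma8 (F : finFieldType) (u v : 'rV[F]_3) (mu : F) :
  (forall l : F, l != 0 ->
     Bt (l *: u) :&: Bt (mu *: v) = sscale l (Bt u :&: Bt ((l^-1 * mu) *: v)))
  /\
  (Bt_partition u -> Bt_partition v ->
     #|Et u :&: Et v| =
       ((#|F| - 1) * \sum_(m : F | m != 0%R) #|Bt u :&: Bt (m *: v)|)%N).
Proof.
split=> [l l_neq0|partu partv]; first exact: BtI_scale.
have [_ Eu] := partu.
rewrite -Eu setI_bigcupl card_bigcup_disjoint; last first.
  move=> i j inz jnz ij; rewrite ![_ :&: Et v]setIC.
  exact: disjoint_BtI_partition.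
under eq_bigr => l l_neq0 do rewrite card_BtI_Et //.
by rewrite sum_nat_const subn1 -(cardC1 (0 : F)).
Qed.
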